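(* For all positive integers $k$ and $n$, \[ \mathrm{LT}(k,n)\geq 3^{-4/3}k^{-2/3}n-3^{-1/3}k^{1/3}. \]
   Context: For a positive integer $k$ let $[k]=\{1,\dots,k\}$. A subsequence of a word $w\in[k]^n$ is a word formed by letters of $w$ at positions $i_1<\dots<i_m$. Two subsequences of $w$ are called twins if they are equal as words and no position of $w$ is used in both. $\mathrm{LT}(w)$ is the maximum length of twins in $w$, and $\mathrm{LT}(k,n)=\min_{w\in[k]^n}\mathrm{LT}(w)$. *)

From mathcomp Require Import all_boot.
Set Implicit Arguments. Unset Strict Implicit. Unset Printing Implicit Defensive.

(* Two subsequences of w are given by selection masks m1, m2 (bit i set iff
   position i is used).  They are twins if they are equal as words and no
   position is used by both. *)
Definition twinsb (T : eqType) (w : seq T) (m1 m2 : (size w).-tuple bool) : bool :=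
  [forall i : 'I_(size w), ~~ (tnth m1 i && tnth m2 i)] && (mask m1 w == mask m2 w).

Arguments twinsb {T} w m1 m2.

Definition LT (T : eqType) (w : seq T) : nat :=
  \max_(m1 : (size w).-tuple bool)
    \max_(m2 : (size w).-tuple bool | twinsb w m1 m2) size (mask m1 w).

(* LT(k,n) = min over words w in [k]^n of LT(w); the alphabet [k] is
   represented by 'I_k = {0,...,k-1} (a relabelling).  The default value n of
   the minimum is irrelevant since LT(w) <= n and the index type is nonempty
   for k >= 1. *)
Definition LTkn (k n : nat) : nat :=
  \big[minn/n]_(w : n.-tuple 'I_k) LT (tval w).

From mathcomp Require Import all_boot zify.
Set Implicit Arguments. Unset Strict Implicit. Unset Printing Implicit Defensive.

(* Cut w into n/(3k) blocks of length 3k.  Grouping the occurrences of each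
   letter of a block into consecutive triples leaves at most 2k positions
   unused, so a block contains m >= k/3 pairwise disjoint monochromatic
   triples i < j < l.  Sort them by i and apply the Erdos--Szekeres product
   bound to j, then to l: some subfamily of size t, with m <= t^3, has two of
   its three coordinates increasing together, and pairing these coordinates
   gives twins of length t >= (k/3)^(1/3).  Concatenating the twins of all
   blocks gives LT(w) >= (n/(3k) - 1) (k/3)^(1/3), which is the bound. *)

Section PairwiseExtra.
Variable X : eqType.

Lemma pairwise_rev (r : rel X) s :
  pairwise r (rev s) = pairwise (fun x y => r y x) s.
Proof. by elim: s => //= x s IH; rewrite rev_cons pairwise_rcons IH all_rev. Qed.

Lemma perm_pairwise (r : rel X) s t :
  symmetric r -> perm_eq s t -> pairwise r s -> pairwise r t.
Proof.
move=> r_sym; elim: s t => [|x s IH] t; first by move/perm_size; case: t.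
move=> pst /= /andP[rx_s rs].
have xt : x \in t by rewrite -(perm_mem pst) mem_head.
case/splitPr: xt pst => t1 t2 pst.
have p12 : perm_eq s (t1 ++ t2).
  by rewrite -(perm_cons x) (perm_trans pst) // -cat1s perm_catCA.
have in_s y : y \in t1 ++ t2 -> y \in s by rewrite (perm_mem p12).
move: (IH _ p12 rs); rewrite !pairwise_cat /= => /and3P[r12 -> ->].
rewrite !andbT; apply/andP; split.
  apply/allrelP => a b at1; rewrite inE => /predU1P[->|bt2].
    by rewrite r_sym (allP rx_s) // in_s // mem_cat at1.
  exact: (allrelP r12).
by apply/allP => y yt2; rewrite (allP rx_s) // in_s // mem_cat yt2 orbT.
Qed.

Lemma sub_pairwise2 (r1 r2 r : rel X) s :
  (forall x y, r1 x y -> r2 x y -> r x y) ->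
  pairwise r1 s -> pairwise r2 s -> pairwise r s.
Proof.
move=> r12 p1 p2; have : pairwise [rel x y | r1 x y && r2 x y] s.
  by rewrite pairwise_relI p1 p2.
by apply: sub_pairwise => x y /andP[]; apply: r12.
Qed.

End PairwiseExtra.

Lemma sum_count_eq_ord (A : Type) (f : A -> nat) N (t : seq A) :
  all (fun j => f j < N) t -> \sum_(v < N) count (fun j => f j == v) t = size t.
Proof.
elim: t => [|j t IH] /=; first by rewrite big1.
case/andP => jN tN; rewrite big_split /= IH // -add1n; congr addn.
rewrite (bigD1 (Ordinal jN)) //= eqxx big1 // => v /eqP vj.
by case: eqP => // fj; case: vj; apply: val_inj.
Qed.

Section ErdosSzekeres.
Variables (X : eqType) (r1 r2 : rel X).
Hypothesis r1_trans : transitive r1.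

(* Each element is paired with the length of the longest r1-chain starting at it. *)
Fixpoint heighted (s : seq X) : seq (X * nat) :=
  if s is x :: s' then
    let hs := heighted s' in (x, (\max_(j <- hs | r1 x j.1) j.2).+1) :: hs
  else [::].

Lemma unzip1_heighted s : unzip1 (heighted s) = s.
Proof. by elim: s => //= x s ->. Qed.

Lemma heighted_mem s j : j \in heighted s -> j.1 \in s.
Proof. by move=> js; rewrite -[s]unzip1_heighted map_f. Qed.

Lemma heighted_gt0 s : all (fun j => 0 < j.2) (heighted s).
Proof. by elim: s => //= x s ->. Qed.

Lemma heighted_chain s j : j \in heighted s ->
  exists c, [/\ subseq (j.1 :: c) s, pairwise r1 (j.1 :: c) & (size c).+1 = j.2].
Proof.
elim: s j => [|x s IH] j //; rewrite inE => /predU1P[->|js]; last first.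
  have [c [cs ? ?]] := IH j js.
  by exists c; split=> //; apply: subseq_trans cs (subseq_cons s x).
pose Q v := exists c, [/\ subseq c s, pairwise r1 c, all (r1 x) c & size c = v].
suff [c [cs rc xc <-]] : Q (\max_(j <- heighted s | r1 x j.1) j.2).
  by exists c; rewrite /= eqxx xc rc.
rewrite big_seq_cond; apply: big_ind => [|a b Qa Qb|i /andP[ihs xi]].
- by exists [::]; rewrite sub0seq.
- by case: (leqP a b) => _; [exact: Qb | exact: Qa].
have [c [ics /= /andP[ic rc] <-]] := IH i ihs.
exists (i.1 :: c); split=> //=; first by rewrite ic rc.
by rewrite xi; apply/allP => z zc; apply: r1_trans xi (allP ic z zc).
Qed.

Definition level v s := [seq j.1 | j <- heighted s & j.2 == v].

Lemma level_subseq v s : subseq (level v s) s.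
Proof.
elim: s => // x s IH; rewrite /level /=; case: ifP => _ /=; first by rewrite eqxx.
exact: subseq_trans IH (subseq_cons s x).
Qed.

(* Within a level no r1 relation holds along s, so comparability forces r2. *)
Lemma level_pairwise v s :
  pairwise (fun x y => r1 x y || r2 x y) s -> pairwise r2 (level v s).
Proof.
elim: s => //= x s IH /andP[xs ps]; rewrite /level /=.
case: ifP => [/eqP hv|_]; last exact: IH.
rewrite /= (IH ps) andbT; apply/allP => y /mapP[j].
rewrite mem_filter => /andP[/eqP jv js] ->.
case/orP: (allP xs j.1 (heighted_mem js)) => // xj.
have := @leq_bigmax_seq _ _ (fun j => r1 x j.1) snd j js xj.
by rewrite jv -hv ltnn.
Qed.

Theorem erdos_szekeres s : pairwise (fun x y => r1 x y || r2 x y) s ->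
  exists s1 s2, [/\ subseq s1 s, pairwise r1 s1, subseq s2 s, pairwise r2 s2
                  & size s <= size s1 * size s2].
Proof.
move=> ps; set M := \max_(j <- heighted s) j.2.
pose Q v := exists c, [/\ subseq c s, pairwise r1 c & v <= size c].
have [s1 [s1s r1s1 Ms1]] : Q M.
  rewrite /M big_seq; apply: big_ind => [|a b [ca [? ? ?]] [cb [? ? ?]]|j js].
  - by exists [::]; rewrite sub0seq.
  - by case: (leqP a b) => ab; [exists cb | exists ca]; split=> //; lia.
  by have [c [? ? hc]] := heighted_chain js; exists (j.1 :: c); rewrite /= hc.
pose v0 := [arg max_(v > (ord0 : 'I_M.+1)) size (level v s)].
have v0_max (v : 'I_M.+1) : size (level v s) <= size (level v0 s).
  by rewrite /v0; case: arg_maxnP => // i _; apply.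
exists s1, (level v0 s); split=> //; [exact: level_subseq | exact: level_pairwise |].
have -> : size s = \sum_(v < M.+1) size (level v s).
  rewrite -{1}[s]unzip1_heighted size_map -(sum_count_eq_ord (f := snd) (N := M.+1)).
    by apply: eq_bigr => v _; rewrite size_map size_filter.
  by apply/allP => j js; rewrite ltnS (@leq_bigmax_seq _ _ predT snd j js).
rewrite big_ord_recl.
have -> : size (level (ord0 : 'I_M.+1) s) = 0.
  rewrite /level size_map size_filter; apply/eqP; rewrite -leqn0 leqNgt -has_count.
  by apply/hasPn => j js; rewrite -lt0n (allP (heighted_gt0 s)).
rewrite add0n (@leq_trans (\sum_(i < M) size (level v0 s))) //.
  by apply: leq_sum => i _; apply: v0_max.
by rewrite sum_nat_const card_ord leq_mul2r Ms1 orbT.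
Qed.

End ErdosSzekeres.

Section TwinMatching.
Variables (T : eqType) (x0 : T).

Lemma mask_mem_iota (u : seq T) (I : seq nat) :
  sorted ltn I -> all (gtn (size u)) I ->
  mask [seq i \in I | i <- iota 0 (size u)] u = [seq nth x0 u i | i <- I].
Proof.
move=> sI Iu; rewrite -[in mask _ u](mkseq_nth x0 u) /mkseq -map_mask.
rewrite size_map size_iota -filter_mask.
congr map; apply: (irr_sorted_eq ltn_trans ltnn) => //.
  exact/sorted_filter/iota_ltn_sorted/ltn_trans.
move=> i; rewrite mem_filter mem_iota /=.
by case iI: (i \in I); rewrite ?andbF //= add0n; apply: (allP Iu i iI).
Qed.

(* A list Z of position pairs (i, j) encodes the twins formed by the first
   and by the second coordinates. *)
Definition twin_matching (u : seq T) (Z : seq (nat * nat)) :=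
  all (fun a => [&& a.1 < size u, a.2 < size u, a.1 != a.2
                  & nth x0 u a.1 == nth x0 u a.2]) Z &&
  pairwise (fun a b => [&& a.1 < b.1, a.2 < b.2, a.1 != b.2 & a.2 != b.1]) Z.

Lemma twin_matching_disjoint u Z i :
  twin_matching u Z -> i \in unzip1 Z -> i \in unzip2 Z -> False.
Proof.
case/andP; elim: Z => [//|a Z IH] /= /andP[ha aZ] /andP[pa pZ].
rewrite !inE => /predU1P[ia|iZ] /predU1P[ia'|iZ'].
- by move: ha; rewrite -ia -ia' eqxx => /and4P[].
- case/mapP: iZ' => b bZ ib; have := allP pa b bZ.
  by rewrite -ia -ib => /and4P[_ _ /eqP].
- case/mapP: iZ => b bZ ib; have := allP pa b bZ.
  by rewrite -ia' -ib => /and4P[_ _ _ /eqP].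
exact: IH aZ pZ iZ iZ'.
Qed.

Lemma twin_matching_LT u Z : twin_matching u Z -> size Z <= LT u.
Proof.
move=> uZ; have /andP[aZ pZ] := uZ.
pose sel (I : seq nat) : (size u).-tuple bool :=
  Tuple (introT eqP (size_mkseq (fun i => i \in I) (size u))).
have mask_sel (f : nat * nat -> nat) :
    (forall a b, [&& a.1 < b.1, a.2 < b.2, a.1 != b.2 & a.2 != b.1] -> f a < f b) ->
    (forall a, a.1 < size u -> a.2 < size u -> f a < size u) ->
    mask (sel (map f Z)) u = map (nth x0 u) (map f Z).
  move=> f_mono f_lt; rewrite mask_mem_iota //.
    by rewrite (sorted_pairwise ltn_trans) pairwise_map; apply: sub_pairwise pZ.
  by rewrite all_map; apply: sub_all aZ => a /and4P[? ? _ _]; apply: f_lt.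
have mask1 : mask (sel (unzip1 Z)) u = map (nth x0 u) (unzip1 Z).
  by apply: mask_sel => [a b /and4P[]|a].
have mask2 : mask (sel (unzip2 Z)) u = map (nth x0 u) (unzip2 Z).
  by apply: mask_sel => [a b /and4P[]|a].
have twins : twinsb u (sel (unzip1 Z)) (sel (unzip2 Z)).
  apply/andP; split.
    apply/forallP => i; rewrite !(tnth_nth false) /= !nth_mkseq //.
    by apply/negP => /andP[]; apply: twin_matching_disjoint uZ.
  rewrite mask1 mask2 -!map_comp; apply/eqP/eq_in_map => a aZ'.
  by have /and4P[_ _ _ /eqP] := allP aZ a aZ'.
apply: leq_trans (leq_bigmax (sel (unzip1 Z))).
apply: leq_trans (leq_bigmax_cond _ twins).
by rewrite mask1 !size_map.
Qed.

Lemma twin_matching_cat u v Z1 Z2 : twin_matching u Z1 -> twin_matching v Z2 ->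
  twin_matching (u ++ v) (Z1 ++ [seq (a.1 + size u, a.2 + size u) | a <- Z2]).
Proof.
case/andP => a1 p1 /andP[a2 p2]; apply/andP; split.
  rewrite all_cat all_map; apply/andP; split.
    apply: sub_all a1 => a /and4P[h1 h2 h3 h4].
    by rewrite size_cat !ltn_addr // !nth_cat h1 h2 h3 h4.
  apply: sub_all a2 => a /and4P[h1 h2 h3 h4] /=.
  rewrite !nth_cat size_cat !ltnNge !leq_addl /= !addnK eqn_add2r h3 h4.
  by rewrite -!ltnNge ![size u + _]addnC !ltn_add2r h1 h2.
rewrite pairwise_cat p1 pairwise_map /=; apply/andP; split; last first.
  by apply: sub_pairwise p2 => a b /=; rewrite !ltn_add2r !eqn_add2r.
apply/allrelP => a _ aZ /mapP[b _ ->] /=.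
have /and4P[a1u a2u _ _] := allP a1 a aZ.
by rewrite !ltn_addl // !neq_ltn ltn_addl // ltn_addl.
Qed.

Lemma twin_matching_size u Z : twin_matching u Z -> size Z <= size u.
Proof.
case/andP => aZ pZ; rewrite -(size_map fst) -(size_iota 0 (size u)).
apply: uniq_leq_size => [|_ /mapP[a aZ' ->]].
  apply: (@pairwise_uniq _ ltn _ ltnn).
  by rewrite pairwise_map; apply: sub_pairwise pZ => a b /and4P[].
by rewrite mem_iota; case/and4P: (allP aZ a aZ').
Qed.

End TwinMatching.

Definition triple := (nat * nat * nat)%type.
Definition tpos (t : triple) : seq nat := [:: t.1.1; t.1.2; t.2].
Definition tdisjoint (t t' : triple) := ~~ has (mem (tpos t')) (tpos t).

Lemma tdisjoint_sym : symmetric tdisjoint.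
Proof. by move=> t t'; rewrite /tdisjoint has_sym. Qed.

Lemma tdisjointP t t' i j : tdisjoint t t' -> i \in tpos t -> j \in tpos t' -> i != j.
Proof. by move=> /hasPn dtt' it; apply: contraTneq => <-; apply: dtt'. Qed.

Lemma tdisjoint_neq t t' : tdisjoint t t' ->
  [&& t.1.1 != t'.1.1, t.1.2 != t'.1.2 & t.2 != t'.2].
Proof. by move=> d; rewrite !(tdisjointP d) // !inE eqxx ?orbT. Qed.

Lemma sort_tdisjoint (s : seq triple) : pairwise tdisjoint s ->
  exists2 s', perm_eq s s' & pairwise (fun t t' => tdisjoint t t' && (t.1.1 < t'.1.1)) s'.
Proof.
move=> ds; pose s' := sort (fun t t' : triple => t.1.1 <= t'.1.1) s.
have ss' : perm_eq s s' by rewrite perm_sym perm_sort.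
exists s' => //; apply: sub_pairwise2 (perm_pairwise tdisjoint_sym ss' ds)
  (_ : pairwise (fun t t' : triple => t.1.1 <= t'.1.1) s') => [t t' d|].
  by rewrite d ltn_neqAle; case/and3P: (tdisjoint_neq d) => ->.
rewrite -(sorted_pairwise (fun b a c => @leq_trans b.1.1 a.1.1 c.1.1)).
by apply: sort_sorted => t t'; apply: leq_total.
Qed.

Section MonochromaticTriples.
Variables (T : eqType) (x0 : T) (u : seq T).

Definition mono_triple (t : triple) :=
  [&& t.1.1 < t.1.2, t.1.2 < t.2, t.2 < size u
    & all (fun i => nth x0 u i == nth x0 u t.1.1) (tpos t)].

Lemma mono_triple_pos t i : mono_triple t -> i \in tpos t ->
  (i < size u) && (nth x0 u i == nth x0 u t.1.1).
Proof.
case/and4P => t12 t23 t3u /allP tu it; rewrite tu // andbT.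
by move: it; rewrite !inE => /or3P[] /eqP ->; lia.
Qed.

Lemma triple_matching (f g : triple -> nat) (s : seq triple) :
  (forall t, f t \in tpos t) -> (forall t, g t \in tpos t) ->
  (forall t, mono_triple t -> f t < g t) ->
  all mono_triple s ->
  pairwise (fun t t' => [&& tdisjoint t t', f t < f t' & g t < g t']) s ->
  twin_matching x0 u [seq (f t, g t) | t <- s].
Proof.
move=> ft gt fg ms ps; apply/andP; split.
  rewrite all_map; apply: sub_all ms => t mt /=.
  have /andP[-> /eqP ->] := mono_triple_pos mt (ft t).
  have /andP[-> /eqP ->] := mono_triple_pos mt (gt t).
  by rewrite neq_ltn fg ?eqxx.
rewrite pairwise_map; apply: sub_pairwise ps => t t' /and3P[d ff gg] /=.
by rewrite ff gg (tdisjointP d (ft t) (gt t')) (tdisjointP d (gt t) (ft t')).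
Qed.

(* Along s1 the first two coordinates increase, along s3 the first and third,
   and along s4 the second and third both decrease. *)
Lemma three_twin_matchings s : all mono_triple s ->
  pairwise (fun t t' => tdisjoint t t' && (t.1.1 < t'.1.1)) s ->
  exists Z1 Z2 Z3, [/\ twin_matching x0 u Z1, twin_matching x0 u Z2,
                       twin_matching x0 u Z3 & size s <= size Z1 * size Z2 * size Z3].
Proof.
move=> ms ps; have ds : pairwise tdisjoint s by apply: sub_pairwise ps => t t' /andP[].
have sub_mono s' : subseq s' s -> all mono_triple s'.
  by move=> s's; apply/allP => t /(mem_subseq s's)/(allP ms).
have cmp2 : pairwise (fun t t' : triple => (t.1.2 < t'.1.2) || (t'.1.2 < t.1.2)) s.
  by apply: sub_pairwise ds => t t' /tdisjoint_neq /and3P[_ + _]; rewrite neq_ltn.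
have [s1 [s2 [s1s inc1 s2s dec2 size12]]] :=
  erdos_szekeres (fun b a c : triple => @ltn_trans b.1.2 a.1.2 c.1.2) cmp2.
have cmp3 : pairwise (fun t t' : triple => (t.2 < t'.2) || (t'.2 < t.2)) s2.
  apply: sub_pairwise (subseq_pairwise s2s ds) => t t' /tdisjoint_neq /and3P[_ _].
  by rewrite neq_ltn.
have [s3 [s4 [s3s inc3 s4s dec4 size34]]] :=
  erdos_szekeres (fun b a c : triple => @ltn_trans b.2 a.2 c.2) cmp3.
have s3s' := subseq_trans s3s s2s; have s4s' := subseq_trans s4s s2s.
exists [seq (t.1.1, t.1.2) | t <- s1], [seq (t.1.1, t.2) | t <- s3],
       [seq (t.1.2, t.2) | t <- rev s4]; split.
- apply: triple_matching => [t|t|t /and4P[]//||]; rewrite ?inE ?eqxx ?orbT ?sub_mono //.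
  by apply: sub_pairwise2 (subseq_pairwise s1s ps) inc1 => t t' /andP[-> ->].
- apply: triple_matching => [t|t|t /and4P[lt12 lt23 _ _]||];
    rewrite ?inE ?eqxx ?orbT ?sub_mono //; first exact: ltn_trans lt12 lt23.
  by apply: sub_pairwise2 (subseq_pairwise s3s' ps) inc3 => t t' /andP[-> ->].
- apply: triple_matching => [t|t|t /and4P[]//||];
    rewrite ?inE ?eqxx ?orbT ?all_rev ?sub_mono //.
  have dec24 : pairwise (fun t t' : triple => (t'.1.2 < t.1.2) && (t'.2 < t.2)) s4.
    by apply: sub_pairwise2 (subseq_pairwise s4s dec2) dec4 => t t' -> ->.
  rewrite pairwise_rev; apply: sub_pairwise2 (subseq_pairwise s4s' ds) dec24.
  by move=> t t' d /andP[-> ->]; rewrite tdisjoint_sym d.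
rewrite !size_map size_rev -mulnA; apply: leq_trans size12 _.
by rewrite leq_mul2l size34 orbT.
Qed.

End MonochromaticTriples.

Fixpoint triples_of (l : seq nat) : seq triple :=
  if l is a :: b :: c :: l' then ((a, b), c) :: triples_of l' else [::].

Lemma seq3_ind (P : seq nat -> Prop) :
  P [::] -> (forall a, P [:: a]) -> (forall a b, P [:: a; b]) ->
  (forall a b c l, P l -> P [:: a, b, c & l]) -> forall l, P l.
Proof.
move=> P0 P1 P2 P3 l; have [n] := ubnP (size l).
elim: n l => // n IH [|a [|b [|c l]]] //= ln; apply: P3; apply: IH; lia.
Qed.

Lemma triples_of_size l : size l <= 3 * size (triples_of l) + 2.
Proof. by elim/seq3_ind: l => //= a b c l IH; lia. Qed.

Lemma triples_of_mem l t i : t \in triples_of l -> i \in tpos t -> i \in l.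
Proof.
elim/seq3_ind: l => // a b c l IH; rewrite inE => /predU1P[->|tl].
  by rewrite !inE => /or3P[] ->; rewrite ?orbT.
by move=> it; rewrite !inE (IH tl it) !orbT.
Qed.

Lemma triples_of_ltn l : pairwise ltn l ->
  all (fun t => (t.1.1 < t.1.2) && (t.1.2 < t.2)) (triples_of l).
Proof.
elim/seq3_ind: l => //= a b c l IH.
by case/andP => /and3P[-> _ _] /andP[/andP[-> _] /andP[_ /IH ->]].
Qed.

Lemma triples_of_disjoint l : pairwise ltn l -> pairwise tdisjoint (triples_of l).
Proof.
elim/seq3_ind: l => //= a b c l IH.
case/andP => /and3P[_ _ al] /andP[/andP[_ bl] /andP[cl pl]].
rewrite IH // andbT; apply/allP => t tl; apply/hasPn => i iabc; apply/negP => it.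
have il := triples_of_mem tl it.
by move: iabc; rewrite !inE => /or3P[] /eqP ei;
  [move: (allP al i il) | move: (allP bl i il) | move: (allP cl i il)];
  rewrite ei /= ltnn.
Qed.

Section GreedyTriples.
Variables (T : eqType) (x0 : T) (u : seq T).

Definition positions a := [seq i <- iota 0 (size u) | nth x0 u i == a].

Lemma positions_ltn a : pairwise ltn (positions a).
Proof.
by apply: pairwise_filter; rewrite -(sorted_pairwise ltn_trans) iota_ltn_sorted.
Qed.

Lemma mem_positions a i : (i \in positions a) = (i < size u) && (nth x0 u i == a).
Proof. by rewrite mem_filter mem_iota add0n andbC. Qed.

Lemma size_positions a : size (positions a) = count (pred1 a) u.
Proof. by rewrite size_filter -[in RHS](mkseq_nth x0 u) /mkseq count_map. Qed.

Lemma positions_mono_triple a t : t \in triples_of (positions a) ->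
  mono_triple x0 u t /\ nth x0 u t.1.1 = a.
Proof.
move=> ta; have /andP[t12 t23] := allP (triples_of_ltn (positions_ltn a)) t ta.
have pos_a i : i \in tpos t -> (i < size u) && (nth x0 u i == a).
  by move=> it; rewrite -mem_positions (triples_of_mem ta it).
have /andP[_ /eqP t1a] := pos_a _ (mem_head _ _).
have /andP[t3u _] : (t.2 < size u) && (nth x0 u t.2 == a).
  by apply: pos_a; rewrite !inE eqxx !orbT.
split=> //; rewrite /mono_triple t12 t23 t3u t1a.
by apply/allP => i /pos_a /andP[_ ->].
Qed.

Definition mono_triples (L : seq T) := flatten [seq triples_of (positions a) | a <- L].

Lemma count_mem_cons a (L : seq T) : a \notin L ->
  count (mem (a :: L)) u = count (pred1 a) u + count (mem L) u.
Proof.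
move=> aL; have aL_u : count (predI (pred1 a) (mem L)) u = 0.
  rewrite -(count_pred0 u); apply: eq_count => x /=.
  by apply/negP => /andP[/eqP xa]; rewrite xa (negbTE aL).
by rewrite -count_predUI aL_u addn0; apply: eq_count => x; rewrite /= inE.
Qed.

Lemma mono_triples_spec L : uniq L ->
  [/\ all (mono_triple x0 u) (mono_triples L), pairwise tdisjoint (mono_triples L),
      {in mono_triples L, forall t, nth x0 u t.1.1 \in L}
    & count (mem L) u <= 3 * size (mono_triples L) + 2 * size L].
Proof.
elim: L => [|a L IH] /=; first by rewrite count_pred0.
case/andP => aL /IH[mL dL lL cL]; rewrite /mono_triples /= -/(mono_triples L).
split.
- by rewrite all_cat mL andbT; apply/allP => t /positions_mono_triple[].
- rewrite pairwise_cat dL triples_of_disjoint ?positions_ltn // !andbT.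
  apply/allrelP => t t' /positions_mono_triple[mt ta] t'L.
  apply/hasPn => i it; apply/negP => it'.
  have /andP[_ /eqP uia] := mono_triple_pos mt it; rewrite ta in uia.
  have := allP mL t' t'L => mt'; have /andP[_ /eqP uit'] := mono_triple_pos mt' it'.
  by move: aL; rewrite -uia uit' lL.
- move=> t; rewrite mem_cat inE.
  by case/orP => [/positions_mono_triple[_ ->]|/lL ->]; rewrite ?eqxx ?orbT.
rewrite count_mem_cons // -size_positions size_cat.
by have := triples_of_size (positions a); lia.
Qed.

End GreedyTriples.

Section Blocks.
Variables (T : eqType) (x0 : T) (b t0 : nat).
Hypothesis b_gt0 : 0 < b.
Hypothesis block_matching : forall u : seq T, size u = b ->
  exists Z, twin_matching x0 u Z /\ t0 <= size Z.

Lemma twin_matching_blocks (w : seq T) :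
  exists Z, twin_matching x0 w Z /\ size w %/ b * t0 <= size Z.
Proof.
have [n] := ubnP (size w); elim: n w => // n IH w wn.
case: (ltnP (size w) b) => [wb|bw]; first by exists [::]; rewrite divn_small.
have size_take_b : size (take b w) = b by rewrite size_take_min; apply/minn_idPl.
have [Z1 [uZ1 tZ1]] := block_matching size_take_b.
have [Z2 [uZ2 tZ2]] :
    exists Z, twin_matching x0 (drop b w) Z /\ size (drop b w) %/ b * t0 <= size Z.
  by apply: IH; rewrite size_drop; lia.
exists (Z1 ++ [seq (a.1 + size (take b w), a.2 + size (take b w)) | a <- Z2]).
rewrite -[w in twin_matching _ w](cat_take_drop b) twin_matching_cat //.
have -> : size w = size (drop b w) + 1 * b by rewrite size_drop mul1n subnK.
by rewrite size_cat size_map divnDMl // mulnDl mul1n addnC leq_add.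
Qed.

End Blocks.

Lemma LTkn_ge_blocks k n b t0 (x0 : 'I_k) : 0 < b ->
  (forall u : seq 'I_k, size u = b -> exists Z, twin_matching x0 u Z /\ t0 <= size Z) ->
  n %/ b * t0 <= LTkn k n.
Proof.
move=> b_gt0 block; apply: (big_ind (fun m => n %/ b * t0 <= m)) => [||w _].
- have [Z [uZ tZ]] := block _ (size_nseq b x0).
  have t0b : t0 <= b by rewrite -(size_nseq b x0) (leq_trans tZ (twin_matching_size uZ)).
  by rewrite (leq_trans (leq_mul (leqnn _) t0b)) ?leq_divM.
- by move=> x y; rewrite leq_min => -> ->.
have [Z [uZ wZ]] := twin_matching_blocks b_gt0 block w.
by rewrite size_tuple in wZ; apply: leq_trans wZ (twin_matching_LT uZ).
Qed.

Lemma leq_cube_max3 (A : Type) (P : A -> Prop) (f : A -> nat) a b c :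
  P a -> P b -> P c -> exists2 x, P x & f a * f b * f c <= f x ^ 3.
Proof.
move=> Pa Pb Pc; have [x Px [ax bx cx]] :
    exists2 x, P x & [/\ f a <= f x, f b <= f x & f c <= f x].
  case: (leqP (f b) (f a)) => ba; case: (leqP (f c) (f a)) => ca;
    case: (leqP (f c) (f b)) => cb;
    first [by exists a => //; split; lia | by exists b => //; split; lia
           | by exists c => //; split; lia].
by exists x => //; rewrite !expnS expn0 muln1 mulnA !leq_mul.
Qed.

Lemma block_twin_matching k (x0 : 'I_k) (u : seq 'I_k) : size u = 3 * k ->
  exists Z, twin_matching x0 u Z /\ k <= 3 * size Z ^ 3.
Proof.
move=> uk; have [ms ds _] := mono_triples_spec x0 u (enum_uniq 'I_k).
have -> : count (mem (enum 'I_k)) u = size u.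
  by rewrite -(count_predT u); apply: eq_count => x; rewrite /= mem_enum.
rewrite size_enum_ord uk => count_u; have [s' ss' ds'] := sort_tdisjoint ds.
have ms' : all (mono_triple x0 u) s' by rewrite -(perm_all _ ss').
have [Z1 [Z2 [Z3 [uZ1 uZ2 uZ3 size123]]]] := three_twin_matchings ms' ds'.
have [Z uZ size_Z] := leq_cube_max3 (P := twin_matching x0 u) size uZ1 uZ2 uZ3.
exists Z; split=> //; rewrite (perm_size ss') in count_u.
have k_le : k <= 3 * size s' by lia.
by rewrite (leq_trans k_le) // leq_mul2l (leq_trans size123 size_Z) orbT.
Qed.

Theorem LTkn_ge_cube_root k n : 0 < k ->
  exists t, k <= 3 * t ^ 3 /\ n %/ (3 * k) * t <= LTkn k n.
Proof.
move=> k_gt0; have cube_ge : exists t, k <= 3 * t ^ 3.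
  by exists k; rewrite expnS mulnCA leq_pmulr // muln_gt0 expn_gt0 k_gt0.
case: (ex_minnP cube_ge) => t k_le t_min; exists t; split=> //.
apply: (@LTkn_ge_blocks _ _ _ _ (Ordinal k_gt0)); first by rewrite muln_gt0.
move=> u /(block_twin_matching (Ordinal k_gt0))[Z [uZ kZ]].
by exists Z; split=> //; apply: t_min.
Qed.

From Stdlib Require Import Reals Lra Psatz.

Section RealBound.
Local Open Scope R_scope.

Lemma Rpower_pow3 x y : 0 < x -> Rpower x y ^ 3 = Rpower x (3 * y).
Proof.
move=> x_gt0; rewrite -Rpower_pow; last exact: exp_pos.
by rewrite Rpower_mult; congr Rpower; simpl; lra.
Qed.

Lemma Rpower_sub1 x y : 0 < x -> Rpower x (y - 1) = Rpower x y / x.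
Proof. by move=> x_gt0; rewrite /Rminus Rpower_plus Rpower_Ropp Rpower_1. Qed.

Lemma pow3_le_inv c t : 0 <= t -> c ^ 3 <= t ^ 3 -> c <= t.
Proof.
move=> t_ge0 ct; apply: Rnot_lt_le => tc; rewrite /= !Rmult_1_r in ct.
have tt : t * t <= c * c by nra.
have : t * (t * t) <= t * (c * c) by apply: Rmult_le_compat_l.
have : t * (c * c) < c * (c * c) by apply: Rmult_lt_compat_r; nra.
lra.
Qed.

(* With c = (k/3)^(1/3), the left-hand side is c (n/(3k) - 1); the
   hypotheses give c <= t and n/(3k) - 1 < q. *)
Lemma Rpower_bound k n q t : 0 < k -> 0 <= t -> 0 <= q ->
  k <= 3 * t ^ 3 -> n < (q + 1) * (3 * k) ->
  Rpower 3 (-4/3) * Rpower k (-2/3) * n - Rpower 3 (-1/3) * Rpower k (1/3) <= q * t.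
Proof.
move=> k_gt0 t_ge0 q_ge0 kt nq.
have -> : Rpower 3 (-4/3) = Rpower 3 (-1/3) / 3.
  by rewrite -Rpower_sub1; [congr Rpower | ]; lra.
have -> : Rpower k (-2/3) = Rpower k (1/3) / k.
  by rewrite -Rpower_sub1; [congr Rpower | ]; lra.
set c := Rpower 3 (-1/3) * Rpower k (1/3).
have c_gt0 : 0 < c by apply: Rmult_lt_0_compat; apply: exp_pos.
have c3 : c ^ 3 = k / 3.
  rewrite /c Rpow_mult_distr !Rpower_pow3 //; last lra.
  rewrite (_ : 3 * (-1/3) = - 1); last lra.
  by rewrite (_ : 3 * (1/3) = 1) ?Rpower_Ropp ?Rpower_1; lra.
have ct : c <= t by apply: pow3_le_inv; lra.
have nq' : n / (3 * k) - 1 < q.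
  by apply: (Rmult_lt_reg_r (3 * k)); [lra | field_simplify; lra].
have -> : Rpower 3 (-1/3) / 3 * (Rpower k (1/3) / k) * n - c = c * (n / (3 * k) - 1).
  by rewrite /c; field; lra.
apply: (Rle_trans _ (c * q)); first by apply: Rmult_le_compat_l; lra.
by rewrite Rmult_comm; apply: Rmult_le_compat_l.
Qed.

End RealBound.

Theorem theorem3 (k n : nat) : (0 < k)%N -> (0 < n)%N ->
  (Rpower 3 (-4/3) * Rpower (INR k) (-2/3) * INR n
     - Rpower 3 (-1/3) * Rpower (INR k) (1/3) <= INR (LTkn k n))%R.
Proof.
move=> k_gt0 _; have [t [kt LT_ge]] := LTkn_ge_cube_root n k_gt0.
apply: (Rle_trans _ (INR (n %/ (3 * k)) * INR t)); last first.
  by rewrite -mult_INR; apply/le_INR/leP.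
have INR3 : INR 3 = 3%R by simpl; lra.
apply: Rpower_bound; try exact: pos_INR.
- exact/lt_0_INR/ltP.
- move: kt; rewrite !expnS expn0 muln1 => /leP/le_INR.
  by rewrite !mult_INR INR3 /= Rmult_1_r.
rewrite -INR3 -S_INR -!mult_INR !multE; apply/lt_INR/ltP/ltn_ceil.
by rewrite muln_gt0 k_gt0.
Qed.
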